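(* Let $k$ be an algebraically closed field of characteristic zero, $n\ge1$, $q\in k$ a primitive $2n$-th root of unity, $a\in k\setminus\{0\}$. Let $\mathfrak wH_{4n}$ be the algebra generated by $Z,X$ with relations $Z^{2n+1}=Z$, $ZX=qXZ$, $X^2=0$. Then $\mathfrak wH_{4n}$ is a noncommutative and noncocommutative weak Hopf algebra with comultiplication, counit and weak antipode $T$ determined by $\Delta(Z)=Z\otimes Z+a(1-q^{-2})Z^{n+1}X\otimes ZX$, $\Delta(X)=X\otimes 1+Z^n\otimes X$, $\epsilon(Z)=1$, $\epsilon(X)=0$, $T(Z)=Z^{2n-1}$, $T(X)=-Z^nX$ (with $\Delta,\epsilon$ algebra maps and $T$ an algebra anti-homomorphism).
   Context: A weak Hopf algebra (in the sense of Li) is a $k$-bialgebra $H$ together with a linear map $T\in\mathrm{Hom}(H,H)$ such that $T*\mathrm{id}*T=T$ and $\mathrm{id}*T*\mathrm{id}=\mathrm{id}$, where $*$ is the convolution product on $\mathrm{Hom}(H,H)$. *)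

From HB Require Import structures.
From mathcomp Require Import all_boot all_algebra.
Set Implicit Arguments. Unset Strict Implicit. Unset Printing Implicit Defensive.
Import GRing.Theory.
Local Open Scope ring_scope.

(* Finite-dimensional k-vector spaces with a chosen finite basis J, realised
   as k^J = {ffun J -> k}; tensor products V(J) (x) V(L) = V(J * L).          *)
Notation vec k J := {ffun J -> (GRing.Field.sort k)^o}.

Definition bvec (k : fieldType) (J : finType) (j : J) : vec k J :=
  [ffun x => (x == j)%:R].

Definition tens (k : fieldType) (J L : finType) (u : vec k J) (v : vec k L)
  : vec k (J * L)%type := [ffun p => u p.1 * v p.2].

Definition tmap (k : fieldType) (J L J' L' : finType)
  (f : vec k J -> vec k J') (g : vec k L -> vec k L') (w : vec k (J * L)%type)
  : vec k (J' * L')%type :=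
  \sum_(p : J * L) w p *: tens (f (bvec k p.1)) (g (bvec k p.2)).

(* bilinear product determined by structure constants c i j = e_i e_j *)
Definition smul (k : fieldType) (J : finType) (c : J -> J -> vec k J)
  (u v : vec k J) : vec k J :=
  \sum_(i : J) \sum_(j : J) (u i * v j) *: c i j.

Definition tconst (k : fieldType) (J : finType) (c : J -> J -> vec k J)
  (p p' : J * J) : vec k (J * J)%type := tens (c p.1 p'.1) (c p.2 p'.2).

Definition spow (k : fieldType) (J : finType) (c : J -> J -> vec k J)
  (one : vec k J) (u : vec k J) (m : nat) : vec k J :=
  iter m (smul c u) one.

Definition is_linear (k : fieldType) (J L : finType) (f : vec k J -> vec k L) :=
  forall (x : k) (u v : vec k J), f (x *: u + v) = x *: f u + f v.

Definition is_assoc_unital (k : fieldType) (J : finType)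
  (c : J -> J -> vec k J) (one : vec k J) :=
  [/\ forall u v w, smul c (smul c u v) w = smul c u (smul c v w),
      forall u, smul c one u = u &
      forall u, smul c u one = u].

Definition conv (k : fieldType) (J : finType) (c : J -> J -> vec k J)
  (Delta : vec k J -> vec k (J * J)%type) (f g : vec k J -> vec k J) (v : vec k J)
  : vec k J :=
  \sum_(p : J * J) Delta v p *: smul c (f (bvec k p.1)) (g (bvec k p.2)).

Definition is_bialgebra (k : fieldType) (J : finType)
  (c : J -> J -> vec k J) (one : vec k J)
  (Delta : vec k J -> vec k (J * J)%type) (eps : vec k J -> k) :=
  [/\ is_assoc_unital c one /\ is_linear Delta /\
        (forall (x : k) u v, eps (x *: u + v) = x * eps u + eps v),
      (forall v i j l,
          tmap Delta id (Delta v) ((i, j), l) = tmap id Delta (Delta v) (i, (j, l))),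
      (forall v, \sum_(p : J * J) (Delta v p * eps (bvec k p.1)) *: bvec k p.2 = v) /\
      (forall v, \sum_(p : J * J) (Delta v p * eps (bvec k p.2)) *: bvec k p.1 = v),
      (forall u v, Delta (smul c u v) = smul (tconst c) (Delta u) (Delta v)) /\
        Delta one = tens one one &
      (forall u v, eps (smul c u v) = eps u * eps v) /\ eps one = 1].

(* weak Hopf algebra in the sense of Li: T * id * T = T and id * T * id = id *)
Definition is_weak_hopf (k : fieldType) (J : finType)
  (c : J -> J -> vec k J) (one : vec k J)
  (Delta : vec k J -> vec k (J * J)%type) (eps : vec k J -> k)
  (T : vec k J -> vec k J) :=
  [/\ is_bialgebra c one Delta eps,
      is_linear T,
      (forall v, conv c Delta (conv c Delta T id) T v = T v) &
      (forall v, conv c Delta (conv c Delta id T) id v = v)].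

(* The algebra wH_{4n}: basis Z^i X^j, 0 <= i <= 2n, j in {0,1}
   (Z^0 = 1), multiplication from Z^{2n+1} = Z, X Z = q^{-1} Z X, X^2 = 0.   *)
Definition wI (n : nat) : finType := ('I_(n.*2.+1) * bool)%type.

(* reduction of exponents of Z using Z^{2n+1} = Z *)
Definition zred (n e : nat) : nat := if (e <= n.*2)%N then e else (e - n.*2)%N.

(* (Z^i X^j)(Z^l X^m) = q^{-jl} Z^{i+l} X^{j+m} *)
Definition wmul (k : fieldType) (n : nat) (q : k) (x y : wI n) : vec k (wI n) :=
  if x.2 && y.2 then 0
  else q ^- (x.2 * y.1)%N *: bvec k (inord (zred n (x.1 + y.1)) : 'I_(n.*2.+1), x.2 || y.2).

Definition wmon (k : fieldType) (n i : nat) (j : bool) : vec k (wI n) :=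
  bvec k (inord i : 'I_(n.*2.+1), j).

Definition wone (k : fieldType) (n : nat) := wmon k n 0 false.
Definition wZ (k : fieldType) (n : nat) := wmon k n 1 false.
Definition wX (k : fieldType) (n : nat) := wmon k n 0 true.

Definition is_alg_morph (k : fieldType) (J : finType)
  (c : J -> J -> vec k J) (one : vec k J) (B : algType k) (f : vec k J -> B) :=
  [/\ forall (x : k) u v, f (x *: u + v) = x *: f u + f v,
      forall u v, f (smul c u v) = f u * f v &
      f one = 1].

From Pilot Require Import Defs.
From HB Require Import structures.
From mathcomp Require Import all_boot all_algebra.
From mathcomp Require Import zify ring.
Set Implicit Arguments. Unset Strict Implicit. Unset Printing Implicit Defensive.
Import GRing.Theory.
Local Open Scope ring_scope.

(* The algebra has basis Z^i X^b (0 <= i <= 2n, b = 0, 1, with Z^0 = 1), and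
   Z, ..., Z^2n form a cyclic group of order 2n with identity Z^2n.  The maps
   Delta, eps and T are defined on this basis, so each axiom reduces, by
   (bi)linearity, to a computation on basis elements, which is arithmetic of
   exponents of Z and of q modulo 2n.  Delta is multiplicative because
   Delta(Z)^i = Z^i (x) Z^i + alpha_i Z^(i+n) X (x) Z^i X with
   alpha_i = a (1 - q^(-2i)), using q^n = -1.  T is a weak antipode because
   T(Z^i) is the inverse of Z^i in the cyclic group, so T * id and id * T send
   Z^i to the idempotent Z^2n (or to 1 when i = 0), while X-terms cancel. *)

Section FiniteBasis.
Variables (k : fieldType) (J : finType).

Lemma scale_regular (x y : k) : x *: (y : k^o) = x * y.
Proof. by []. Qed.

Lemma vec_bvec_sum (u : vec k J) : u = \sum_j u j *: bvec k j.
Proof.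
apply/ffunP => x; rewrite sum_ffunE (bigD1 x) //= !ffunE eqxx big1 ?addr0.
  by rewrite [_ *: _]mulr1.
by move=> j /negbTE hj; rewrite !ffunE eq_sym hj [_ *: _]mulr0.
Qed.

Definition linext (V : lmodType k) (F : J -> V) (v : vec k J) : V :=
  \sum_j v j *: F j.

Lemma linext_is_linear (V : lmodType k) (F : J -> V) : linear (linext F).
Proof.
move=> x u v; rewrite /linext scaler_sumr -big_split /=.
by apply: eq_bigr => j _; rewrite !ffunE scalerDl scalerA.
Qed.

HB.instance Definition _ (V : lmodType k) (F : J -> V) :=
  GRing.isLinear.Build k (vec k J) V *:%R (linext F) (linext_is_linear F).

Lemma linext_bvec (V : lmodType k) (F : J -> V) j : linext F (bvec k j) = F j.
Proof.
rewrite /linext (bigD1 j) //= ffunE eqxx scale1r big1 ?addr0 //.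
by move=> i /negbTE hi; rewrite ffunE hi scale0r.
Qed.

Lemma eq_linear_bvec (V : lmodType k) (f g : vec k J -> V) :
  linear f -> linear g -> (forall j, f (bvec k j) = g (bvec k j)) -> forall u, f u = g u.
Proof.
have expand (h : vec k J -> V) : linear h -> h =1 linext (fun j => h (bvec k j)).
  move=> lh u; pose H : {linear vec k J -> V} := HB.pack h (GRing.isLinear.Build _ _ _ _ h lh).
  transitivity (H (\sum_j u j *: bvec k j)); first by rewrite -vec_bvec_sum.
  by rewrite linear_sum; apply: eq_bigr => j _; rewrite linearZ.
move=> lf lg fg u; rewrite (expand f lf) (expand g lg).
by apply: eq_bigr => j _; rewrite fg.
Qed.

Lemma eq_bilinear_bvec (V : lmodType k) (f g : vec k J -> vec k J -> V) :
  (forall v, linear (f^~ v)) -> (forall u, linear (f u)) ->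
  (forall v, linear (g^~ v)) -> (forall u, linear (g u)) ->
  (forall i j, f (bvec k i) (bvec k j) = g (bvec k i) (bvec k j)) ->
  forall u v, f u v = g u v.
Proof.
move=> fl fr gl gr fg u v; apply: (eq_linear_bvec (fl v) (gl v)) => i.
exact: (eq_linear_bvec (fr _) (gr _)).
Qed.

Variable c : J -> J -> vec k J.

Lemma smul_is_bilinear : bilinear_for *:%R *:%R (smul c).
Proof.
split=> [v|u] x w w' /=; rewrite /smul scaler_sumr -big_split; apply: eq_bigr => i _ /=;
  rewrite scaler_sumr -big_split; apply: eq_bigr => j _ /=;
  by rewrite !ffunE scalerA -scalerDl ?mulrDl ?mulrDr !mulrA // [x * _]mulrC.
Qed.

HB.instance Definition _ := bilinear_isBilinear.Build k (vec k J) (vec k J) (vec k J)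
  _ _ (smul c) smul_is_bilinear.

Lemma smul_bvec i j : smul c (bvec k i) (bvec k j) = c i j.
Proof.
rewrite /smul (bigD1 i) //= [X in _ + X]big1 ?addr0; last first.
  by move=> i' /negbTE hi; apply: big1 => j' _; rewrite !ffunE hi mul0r scale0r.
rewrite (bigD1 j) //= [X in _ + X]big1 ?addr0; last first.
  by move=> j' /negbTE hj; rewrite !ffunE hj mulr0 scale0r.
by rewrite !ffunE !eqxx mulr1 scale1r.
Qed.

End FiniteBasis.

Section Tensor.
Variables (k : fieldType) (J L : finType).

Lemma tens_is_bilinear : bilinear_for *:%R *:%R (@tens k J L).
Proof.
split=> [v|u] x w w'; apply/ffunP => p; rewrite !ffunE /=.
  by rewrite mulrDl -mulrA.
by rewrite mulrDr mulrCA.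
Qed.

HB.instance Definition _ := bilinear_isBilinear.Build k (vec k J) (vec k L)
  (vec k (J * L)%type) _ _ (@tens k J L) tens_is_bilinear.

Lemma tens_bvec (x : J) (y : L) : tens (bvec k x) (bvec k y) = bvec k (x, y).
Proof.
apply/ffunP => -[i j]; rewrite !ffunE /= xpair_eqE.
by case: (i == x); case: (j == y); rewrite ?mulr1 ?mulr0.
Qed.

Variables (J' L' : finType) (f : vec k J -> vec k J') (g : vec k L -> vec k L').

HB.instance Definition _ := GRing.Linear.copy (tmap f g) (linext _).

Lemma tmap_bvec p : tmap f g (bvec k p) = tens (f (bvec k p.1)) (g (bvec k p.2)).
Proof. exact: linext_bvec. Qed.

End Tensor.

Section Convolution.
Variables (k : fieldType) (J : finType) (c : J -> J -> vec k J).

Lemma convE (Delta : vec k J -> vec k (J * J)%type) (f g : vec k J -> vec k J) v :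
  conv c Delta f g v = linext (fun p : J * J => smul c (f (bvec k p.1)) (g (bvec k p.2))) (Delta v).
Proof. by []. Qed.

Lemma conv_linear (Delta : vec k J -> vec k (J * J)%type) (f g : vec k J -> vec k J) :
  linear Delta -> linear (conv c Delta f g).
Proof. by move=> lD x u v; rewrite !convE lD linearP. Qed.

End Convolution.

(* Case-split on the innermost conditionals only as far as [lia] needs. *)
Ltac split_lia :=
  first [ lia
        | match goal with |- context[if ?b then _ else _] =>
            lazymatch b with context[if _ then _ else _] => fail | _ =>
              case: (boolP b) => ?; split_lia end end ].

Section WeakHopf.
Variables (k : fieldType) (n : nat) (q a : k).
Hypotheses (n_gt0 : (0 < n)%N) (q_prim : (n.*2).-primitive_root q).

(* Z^(zinv i) is the inverse of Z^i in the cyclic group {Z, ..., Z^2n}; zinv 0 = 0. *)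
Definition zinv (i : nat) : nat :=
  if i == 0%N then 0%N else if i == n.*2 then n.*2 else (n.*2 - i)%N.

Ltac exp_lia :=
  lazymatch goal with |- is_true (leq _ _) => idtac | |- @eq nat _ _ => idtac end;
  rewrite ?/zred ?/zinv; split_lia.

Lemma q_neq0 : q != 0.
Proof. by rewrite (prim_root_eq0 q_prim) double_eq0 -lt0n n_gt0. Qed.

Lemma q_exprn : q ^+ n = -1.
Proof.
have q_sq : (q ^+ n) ^+ 2 == 1 by rewrite -exprM muln2 (prim_expr_order q_prim).
have q_n1 : q ^+ n != 1.
  by rewrite -(expr0 q) (eq_prim_root_expr q_prim) mod0n modn_small; lia.
by move: q_sq; rewrite sqrf_eq1 (negbTE q_n1) => /eqP.
Qed.

Lemma q_expr_shift m A B : A = (B + m * n.*2)%N -> q ^+ A = q ^+ B.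
Proof. by move=> ->; rewrite exprD mulnC exprM (prim_expr_order q_prim) expr1n mulr1. Qed.

Lemma q_expr_zred e : q ^+ zred n e = q ^+ e.
Proof. by symmetry; rewrite /zred; case: ifP => // ?; apply: (@q_expr_shift 1); lia. Qed.

Lemma q_expr_zinv i : q ^+ zinv i = q ^+ (n.*2 - i).
Proof.
rewrite /zinv; case: eqP => [->|_]; first by rewrite subn0 (prim_expr_order q_prim).
by case: eqP => [->|//]; rewrite subnn (prim_expr_order q_prim).
Qed.

Lemma q_expr_eq A B :
  A = B \/ A = (B + n.*2)%N \/ B = (A + n.*2)%N \/ A = (B + 2 * n.*2)%N
    \/ B = (A + 2 * n.*2)%N ->
  q ^+ A = q ^+ B.
Proof.
case=> [-> // | [AB | [BA | [AB | BA]]]].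
- by apply: (@q_expr_shift 1); rewrite AB mul1n.
- by symmetry; apply: (@q_expr_shift 1); rewrite BA mul1n.
- exact: (@q_expr_shift 2).
- by symmetry; apply: (@q_expr_shift 2).
Qed.

Lemma q_invr_zred_shift l : q ^- zred n (l + n) = - q ^- l.
Proof. by rewrite q_expr_zred exprD q_exprn mulrN1 invrN. Qed.

Lemma q_invr_neq1 : q^-1 != 1.
Proof.
apply: contraTneq isT => qV1; have : q ^+ 1 == q ^+ 0 by rewrite expr0 -[q]invrK qV1 invr1.
by rewrite (eq_prim_root_expr q_prim) mod0n modn_small //; lia.
Qed.

Ltac qexp_lia :=
  try (congr (- _)); try (congr (GRing.inv _));
  rewrite ?exprD ?q_expr_zred ?q_expr_zinv -?exprD; apply: q_expr_eq; rewrite ?/zred ?/zinv; split_lia.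

Local Notation N := n.*2.+1.
Local Notation c := (@wmul k n q).
Local Notation mul := (smul c).
Local Notation wmon := (wmon k n).

Definition widx (i : nat) (b : bool) : wI n := (inord i, b).

Lemma widx1 i b : (i < N)%N -> (widx i b).1 = i :> nat.
Proof. by move=> ?; rewrite /= inordK. Qed.

Lemma wI_ind (P : wI n -> Prop) : (forall i b, (i < N)%N -> P (widx i b)) -> forall s, P s.
Proof. by move=> Pw [i b]; rewrite -[i]inord_val; apply: Pw. Qed.

Lemma wmul_widx i b l d : (i < N)%N -> (l < N)%N ->
  c (widx i b) (widx l d) =
  if b && d then 0 else q ^- (b * l) *: wmon (zred n (i + l)) (b || d).
Proof. by move=> ? ?; rewrite /wmul !widx1. Qed.

Lemma wmul_wmon i b l d : (i < N)%N -> (l < N)%N ->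
  mul (wmon i b) (wmon l d) =
  if b && d then 0 else q ^- (b * l) *: wmon (zred n (i + l)) (b || d).
Proof. by move=> ? ?; rewrite smul_bvec wmul_widx. Qed.

Lemma wmul_ZZ i l : (i < N)%N -> (l < N)%N ->
  mul (wmon i false) (wmon l false) = wmon (zred n (i + l)) false.
Proof. by move=> ? ?; rewrite wmul_wmon //= expr0 invr1 scale1r. Qed.

Lemma wmul_ZZX i l : (i < N)%N -> (l < N)%N ->
  mul (wmon i false) (wmon l true) = wmon (zred n (i + l)) true.
Proof. by move=> ? ?; rewrite wmul_wmon //= expr0 invr1 scale1r. Qed.

Lemma wmul_ZXZ i l : (i < N)%N -> (l < N)%N ->
  mul (wmon i true) (wmon l false) = q ^- l *: wmon (zred n (i + l)) true.
Proof. by move=> ? ?; rewrite wmul_wmon //= mul1n. Qed.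

Lemma wmul_ZXZX i l : (i < N)%N -> (l < N)%N -> mul (wmon i true) (wmon l true) = 0.
Proof. by move=> ? ?; rewrite wmul_wmon. Qed.

Ltac linearity :=
  by repeat move=> ?; rewrite /= ?(linearDl, linearZl, linearDr, linearZr, linearD, linearZ).

Ltac wmon_eq :=
  rewrite ?scalerA ?mulrN ?mulNr -?invfM -?exprD;
  first [ congr (Defs.wmon _ _ _ _); exp_lia
        | congr (_ *: Defs.wmon _ _ _ _); first [exp_lia | qexp_lia]
        | done ].

Ltac wmul_simp :=
  rewrite ?(linear0l, linear0r, linearZl, linearZr, linearNl, linearNr, linearDl, linearDr) /=;
  rewrite ?wmul_ZZ ?wmul_ZZX ?wmul_ZXZ ?wmul_ZXZX; try exp_lia;
  rewrite ?mul0n ?mul1n ?expr0 ?invr1 ?scale1r ?oppr0 ?scaler0 ?addr0 ?add0r ?scalerA.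

Lemma wmul_assoc u v w : mul (mul u v) w = mul u (mul v w).
Proof.
move: u v; apply: eq_bilinear_bvec; try linearity.
move=> s t; move: w; apply: eq_linear_bvec; try linearity.
move=> r.
elim/wI_ind: s => i b hi; elim/wI_ind: t => l d hl; elim/wI_ind: r => m e hm.
rewrite !wmul_wmon //.
by case: b; case: d; case: e; rewrite /=; wmul_simp; wmon_eq.
Qed.

Lemma wmul1l u : mul (wone k n) u = u.
Proof.
move: u; apply: eq_linear_bvec; try linearity.
by elim/wI_ind => i b hi; rewrite wmul_wmon //= expr0 invr1 scale1r; wmon_eq.
Qed.

Lemma wmul1r u : mul u (wone k n) = u.
Proof.
move: u; apply: eq_linear_bvec; try linearity.
by elim/wI_ind => i b hi; rewrite wmul_wmon //= andbF muln0 expr0 invr1 scale1r orbF; wmon_eq.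
Qed.

Lemma wH_assoc_unital : is_assoc_unital c (wone k n).
Proof. by split; [exact: wmul_assoc | exact: wmul1l | exact: wmul1r]. Qed.

Lemma spow_wZ m : (m <= n.*2)%N -> spow c (wone k n) (wZ k n) m = wmon m false.
Proof.
elim: m => [//|m IH] lt_m2n.
by rewrite /spow iterS -/(spow _ _ _ _) IH ?wmul_ZZ; try exp_lia; wmon_eq.
Qed.

Lemma spow_wZ_order : spow c (wone k n) (wZ k n) N = wZ k n.
Proof. by rewrite /spow iterS -/(spow _ _ _ _) spow_wZ ?wmul_ZZ; try exp_lia; wmon_eq. Qed.

Lemma wZX : mul (wZ k n) (wX k n) = wmon 1 true.
Proof. by rewrite wmul_ZZX; try exp_lia; wmon_eq. Qed.

Lemma wXZ : mul (wX k n) (wZ k n) = q^-1 *: wmon 1 true.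
Proof. by rewrite wmul_ZXZ; try exp_lia; wmon_eq. Qed.

Lemma wH_relations :
  mul (wZ k n) (wX k n) = q *: mul (wX k n) (wZ k n) /\ mul (wX k n) (wX k n) = 0.
Proof. by rewrite wZX wXZ scalerA divff ?q_neq0 // scale1r wmul_ZXZX. Qed.

Lemma wH_noncommutative : mul (wZ k n) (wX k n) != mul (wX k n) (wZ k n).
Proof.
rewrite wZX wXZ; apply/negP => /eqP/ffunP/(_ (widx 1 true)).
by rewrite !ffunE eqxx [_ *: _]mulr1 => /esym/eqP; rewrite (negbTE q_invr_neq1).
Qed.

Section UniversalProperty.
Variables (B : algType k) (z x : B).
Hypotheses (z_order : z ^+ N = z) (zx : z * x = q *: (x * z)) (x_sq : x ^+ 2 = 0).

Definition wlift := linext (fun s : wI n => z ^+ s.1 * x ^+ s.2).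
HB.instance Definition _ := GRing.Linear.copy wlift (linext _).

Lemma wlift_wmon i b : (i < N)%N -> wlift (wmon i b) = z ^+ i * x ^+ b.
Proof. by move=> ?; rewrite /wlift linext_bvec widx1. Qed.

Lemma expr_zred e : z ^+ zred n e = z ^+ e.
Proof.
rewrite /zred; case: ifP => // /negbT; rewrite -ltnNge => lt_2n_e.
have -> : e = ((e - N) + N)%N by lia.
by rewrite exprD z_order -exprSr; congr (z ^+ _); lia.
Qed.

Lemma x_exprz l : x * z ^+ l = q ^- l *: (z ^+ l * x).
Proof.
elim: l => [|l IH]; first by rewrite expr0 invr1 scale1r mulr1 mul1r.
have xz : x * z = q^-1 *: (z * x) by rewrite zx scalerA mulVf ?q_neq0 // scale1r.
rewrite {1}exprS mulrA xz -scalerAl -mulrA IH -scalerAr scalerA mulrA -exprS.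
by rewrite [q ^+ l.+1]exprS invfM.
Qed.

Lemma wlift_mul u v : wlift (mul u v) = wlift u * wlift v.
Proof.
move: u v; apply: eq_bilinear_bvec; try linearity.
- by move=> v y u w; rewrite linearP mulrDl -scalerAl.
- by move=> u y v w; rewrite linearP mulrDr -scalerAr.
elim/wI_ind => i b hi; elim/wI_ind => l d hl.
rewrite wmul_wmon // !wlift_wmon //.
case: b; case: d => /=; rewrite ?linear0 ?linearZ /= ?wlift_wmon ?expr_zred /=; try exp_lia;
  rewrite ?mul0n ?mul1n ?expr0 ?expr1 ?invr1 ?scale1r ?mulr1 ?mul1r.
- by rewrite mulrA -(mulrA _ x) x_exprz -scalerAr -scalerAl -!mulrA -expr2 x_sq !mulr0 scaler0.
- by rewrite -mulrA x_exprz -scalerAr mulrA -exprD.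
- by rewrite mulrA -exprD.
- by rewrite exprD.
Qed.

Lemma wH_universal : exists f : vec k (wI n) -> B,
  [/\ is_alg_morph c (wone k n) f, f (wZ k n) = z, f (wX k n) = x &
     forall g : vec k (wI n) -> B,
       is_alg_morph c (wone k n) g -> g (wZ k n) = z -> g (wX k n) = x ->
       forall v, g v = f v].
Proof.
exists wlift; split.
- split; [exact: linearP | exact: wlift_mul |].
  by rewrite wlift_wmon // !expr0 mulr1.
- by rewrite wlift_wmon ?expr1 ?expr0 ?mulr1 //; lia.
- by rewrite wlift_wmon // expr0 expr1 mul1r.
move=> g [g_lin g_mul g1] gZ gX; apply: eq_linear_bvec => //; first exact: linearP.
elim/wI_ind => i b hi; rewrite wlift_wmon //.
have g_Zpow : g (wmon i false) = z ^+ i.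
  rewrite -spow_wZ; last lia.
  elim: (i) => [|m IH]; first by rewrite expr0 g1.
  by rewrite /spow iterS -/(spow _ _ _ _) g_mul IH gZ exprS.
case: b; last by rewrite g_Zpow expr0 mulr1.
have -> : bvec k (widx i true) = mul (wmon i false) (wX k n) by rewrite wmul_ZZX; try exp_lia; wmon_eq.
by rewrite g_mul g_Zpow gX expr1.
Qed.

End UniversalProperty.

(* The coefficient of Z^(i+n) X (x) Z^i X in Delta(Z)^i. *)
Definition alpha (i : nat) : k := a * (1 - q ^- (2 * i)).

Lemma alpha0 : alpha 0 = 0.
Proof. by rewrite /alpha muln0 expr0 invr1 subrr mulr0. Qed.

Lemma alpha_shift i : alpha (zred n (i + n)) = alpha i.
Proof. by rewrite /alpha; congr (_ * (_ - _)); qexp_lia. Qed.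

Lemma alpha_zredD i l : alpha (zred n (i + l)) = alpha l + alpha i * q ^- (2 * l).
Proof.
rewrite /alpha; have -> : q ^- (2 * zred n (i + l)) = q ^- (2 * i) * q ^- (2 * l).
  by rewrite -invfM -exprD; qexp_lia.
ring.
Qed.

Definition wDelta_bvec (s : wI n) : vec k (wI n * wI n)%type :=
  let i := nat_of_ord s.1 in
  if s.2 then bvec k (widx i true, widx i false) + bvec k (widx (zred n (i + n)) false, widx i true)
  else bvec k (widx i false, widx i false)
       + alpha i *: bvec k (widx (zred n (i + n)) true, widx i true).

Definition wDelta := linext wDelta_bvec.
HB.instance Definition _ := GRing.Linear.copy wDelta (linext _).

Lemma wDelta_Zpow i : (i < N)%N -> wDelta (wmon i false) =
  bvec k (widx i false, widx i false)
  + alpha i *: bvec k (widx (zred n (i + n)) true, widx i true).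
Proof. by move=> ?; rewrite /wDelta linext_bvec /wDelta_bvec widx1. Qed.

Lemma wDelta_ZpowX i : (i < N)%N -> wDelta (wmon i true) =
  bvec k (widx i true, widx i false) + bvec k (widx (zred n (i + n)) false, widx i true).
Proof. by move=> ?; rewrite /wDelta linext_bvec /wDelta_bvec widx1. Qed.

Lemma wDelta_coassoc v i j l :
  tmap wDelta id (wDelta v) ((i, j), l) = tmap id wDelta (wDelta v) (i, (j, l)).
Proof.
move: v; apply: (@eq_linear_bvec _ _ k^o); try by move=> ? ? ?; rewrite !linearP !ffunE.
elim/wI_ind => m b hm; case: b;
  rewrite ?wDelta_Zpow ?wDelta_ZpowX // ?(linearD, linearZ) /= !tmap_bvec /=
    ?wDelta_Zpow ?wDelta_ZpowX; try exp_lia.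
all: rewrite !ffunE /= !xpair_eqE -!mulnb !natrM ?scale_regular ?alpha_shift.
(* Shifting twice by n returns to m unless m = 0, where alpha 0 = 0 kills the term. *)
all: have [->|m_neq0] := eqVneq m 0%N; first by rewrite alpha0; ring.
all: have -> : zred n (zred n (m + n) + n) = m by exp_lia.
all: ring.
Qed.

Definition weps := linext (fun s : wI n => ((~~ s.2)%:R : k^o)).
HB.instance Definition _ := GRing.Linear.copy weps (linext _).

Lemma weps_wmon i b : weps (wmon i b) = (~~ b)%:R.
Proof. by rewrite /weps linext_bvec. Qed.

Lemma weps_counitl v :
  \sum_(p : wI n * wI n) (wDelta v p * weps (bvec k p.1)) *: bvec k p.2 = v.
Proof.
have -> : \sum_(p : wI n * wI n) (wDelta v p * weps (bvec k p.1)) *: bvec k p.2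
    = linext (fun p : wI n * wI n => weps (bvec k p.1) *: bvec k p.2) (wDelta v).
  by apply: eq_bigr => p _; rewrite scalerA.
move: v; apply: eq_linear_bvec; try linearity.
elim/wI_ind => m b hm; case: b;
  rewrite ?wDelta_Zpow ?wDelta_ZpowX // ?(linearD, linearZ) /= !linext_bvec !weps_wmon /=.
all: by rewrite ?scale1r ?scale0r ?scaler0 ?addr0 ?add0r.
Qed.

Lemma weps_counitr v :
  \sum_(p : wI n * wI n) (wDelta v p * weps (bvec k p.2)) *: bvec k p.1 = v.
Proof.
have -> : \sum_(p : wI n * wI n) (wDelta v p * weps (bvec k p.2)) *: bvec k p.1
    = linext (fun p : wI n * wI n => weps (bvec k p.2) *: bvec k p.1) (wDelta v).
  by apply: eq_bigr => p _; rewrite scalerA.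
move: v; apply: eq_linear_bvec; try linearity.
elim/wI_ind => m b hm; case: b;
  rewrite ?wDelta_Zpow ?wDelta_ZpowX // ?(linearD, linearZ) /= !linext_bvec !weps_wmon /=.
all: by rewrite ?scale1r ?scale0r ?scaler0 ?addr0 ?add0r.
Qed.

Lemma weps_mul u v : weps (mul u v) = weps u * weps v.
Proof.
move: u v; apply: (@eq_bilinear_bvec _ _ k^o); try linearity.
- by move=> v y u w; rewrite /= linearP /= !scale_regular mulrDl mulrA.
- by move=> u y v w; rewrite /= linearP /= !scale_regular mulrDr mulrCA.
elim/wI_ind => i b hi; elim/wI_ind => l d hl.
rewrite wmul_wmon // !weps_wmon; case: b; case: d;
  by rewrite /= ?linear0 ?linearZ /= ?weps_wmon /= ?scale_regular ?mulr0 ?mul0n ?expr0 ?invr1 ?mulr1.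
Qed.

Lemma wDelta_mul u v : wDelta (mul u v) = smul (tconst c) (wDelta u) (wDelta v).
Proof.
move: u v; apply: eq_bilinear_bvec; try linearity.
elim/wI_ind => i b hi; elim/wI_ind => l d hl; rewrite wmul_wmon //.
have E1 : zred n (i + zred n (l + n)) = zred n (zred n (i + l) + n) by exp_lia.
have E2 : zred n (zred n (i + n) + l) = zred n (zred n (i + l) + n) by exp_lia.
case: b; case: d; rewrite ?wDelta_Zpow ?wDelta_ZpowX //= ?(linearDl, linearZl, linearDr, linearZr) /=
  !smul_bvec /tconst /= ?wmul_widx; try exp_lia.
all: rewrite /= ?mul0n ?mul1n ?expr0 ?invr1 ?scale1r ?linear0 ?linearZ /= ?wDelta_Zpow ?wDelta_ZpowX;
  try exp_lia.
all: rewrite ?(linear0l, linear0r, linearZl, linearZr) /= ?scaler0 ?addr0 ?add0r ?tens_bvec.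
all: rewrite ?E1 ?E2 ?q_invr_zred_shift ?alpha_zredD.
- by rewrite scaleNr addNr.
- by rewrite scalerDr.
- by rewrite scaler0 addr0.
- by rewrite scalerDl addrA !scalerA -mulrA -invfM -exprD addnn mul2n.
Qed.

(* T(Z^i X) = T(X) T(Z^i) = - Z^n X Z^(zinv i). *)
Definition wT_bvec (s : wI n) : vec k (wI n) :=
  let i := nat_of_ord s.1 in
  if s.2 then - q ^- zinv i *: wmon (zred n (n + zinv i)) true else wmon (zinv i) false.

Definition wT := linext wT_bvec.
HB.instance Definition _ := GRing.Linear.copy wT (linext _).

Lemma wT_Zpow i : (i < N)%N -> wT (wmon i false) = wmon (zinv i) false.
Proof. by move=> ?; rewrite /wT linext_bvec /wT_bvec widx1. Qed.

Lemma wT_ZpowX i : (i < N)%N ->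
  wT (wmon i true) = - q ^- zinv i *: wmon (zred n (n + zinv i)) true.
Proof. by move=> ?; rewrite /wT linext_bvec /wT_bvec widx1. Qed.

Lemma wT_antimul u v : wT (mul u v) = mul (wT v) (wT u).
Proof.
move: u v; apply: eq_bilinear_bvec; try linearity.
elim/wI_ind => i b hi; elim/wI_ind => l d hl; rewrite wmul_wmon //.
case: b; case: d; rewrite /= ?linear0 ?linearZ /= ?wT_Zpow ?wT_ZpowX; try exp_lia.
all: by wmul_simp; wmon_eq.
Qed.

Lemma q_expr_zinv_add i : (i < N)%N -> q ^+ (zinv i + i) = 1.
Proof. by move=> hi; rewrite -(expr0 q); qexp_lia. Qed.

Lemma conv_wT_id_Zpow i : (i < N)%N ->
  conv c wDelta wT id (wmon i false) = wmon (zred n (zinv i + i)) false.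
Proof.
move=> hi; rewrite convE wDelta_Zpow // linearD linearZ /= !linext_bvec /= wT_Zpow ?wT_ZpowX;
  try exp_lia.
by wmul_simp.
Qed.

Lemma conv_wT_id_ZpowX i : (i < N)%N -> conv c wDelta wT id (wmon i true) = 0.
Proof.
move=> hi; rewrite convE wDelta_ZpowX // linearD /= !linext_bvec /= wT_Zpow ?wT_ZpowX;
  try exp_lia.
wmul_simp; rewrite mulNr -invfM -exprD q_expr_zinv_add // invr1 scaleN1r.
have -> : zred n (zinv (zred n (i + n)) + i) = zred n (zred n (n + zinv i) + i) by exp_lia.
exact: addNr.
Qed.

Lemma conv_id_wT_Zpow i : (i < N)%N ->
  conv c wDelta id wT (wmon i false) = wmon (zred n (i + zinv i)) false.
Proof.
move=> hi; rewrite convE wDelta_Zpow // linearD linearZ /= !linext_bvec /= wT_Zpow ?wT_ZpowX;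
  try exp_lia.
by wmul_simp.
Qed.

Lemma conv_id_wT_ZpowX i : (i < N)%N -> conv c wDelta id wT (wmon i true) =
  q ^- zinv i *: wmon (zred n (i + zinv i)) true
  - q ^- zinv i *: wmon (zred n (zred n (i + n) + zred n (n + zinv i))) true.
Proof.
move=> hi; rewrite convE wDelta_ZpowX // linearD /= !linext_bvec /= wT_Zpow ?wT_ZpowX;
  try exp_lia.
by wmul_simp; rewrite scaleNr.
Qed.

Lemma wDelta_linear : linear wDelta.
Proof. exact: linearP. Qed.

Lemma conv_wT_id_wT v : conv c wDelta (conv c wDelta wT id) wT v = wT v.
Proof.
move: v; apply: eq_linear_bvec; [exact: conv_linear wDelta_linear | exact: linearP |].
elim/wI_ind => m b hm; rewrite convE.
case: b; rewrite ?wDelta_Zpow ?wDelta_ZpowX // ?(linearD, linearZ) /= !linext_bvec /=.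
all: rewrite ?conv_wT_id_Zpow ?conv_wT_id_ZpowX ?wT_Zpow ?wT_ZpowX; try exp_lia.
all: by wmul_simp; wmon_eq.
Qed.

Lemma conv_id_wT_id v : conv c wDelta (conv c wDelta id wT) id v = v.
Proof.
move: v; apply: eq_linear_bvec; [exact: conv_linear wDelta_linear | by [] |].
elim/wI_ind => m b hm; rewrite convE.
case: b; rewrite ?wDelta_Zpow ?wDelta_ZpowX // ?(linearD, linearZ) /= !linext_bvec /=.
all: rewrite ?conv_id_wT_Zpow ?conv_id_wT_ZpowX; try exp_lia.
all: wmul_simp; rewrite ?oppr0 ?scaler0 ?addr0.
2: by wmon_eq.
rewrite -invfM -exprD q_expr_zinv_add // invr1 !scale1r.
have -> : zred n (zred n (zred n (m + n) + zred n (n + zinv m)) + m)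
        = zred n (zred n (zred n (m + n) + zinv (zred n (m + n))) + m) by exp_lia.
have -> : zred n (zred n (m + zinv m) + m) = m by exp_lia.
exact: subrK.
Qed.

Lemma wDelta_wZ : wDelta (wZ k n) =
  tens (wZ k n) (wZ k n) + (a * (1 - q ^- 2)) *: tens (wmon n.+1 true) (mul (wZ k n) (wX k n)).
Proof.
rewrite wZX wDelta_Zpow; last exp_lia.
rewrite /wZ /wmon !tens_bvec /alpha muln1.
by have -> : zred n (1 + n) = n.+1 by exp_lia.
Qed.

Lemma wDelta_wX : wDelta (wX k n) = tens (wX k n) (wone k n) + tens (wmon n false) (wX k n).
Proof.
rewrite wDelta_ZpowX; last exp_lia.
by rewrite /wX /wone /wmon !tens_bvec; have -> : zred n (0 + n) = n by exp_lia.
Qed.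

Lemma wDelta_noncocommutative :
  wDelta (wX k n) != [ffun p => wDelta (wX k n) (p.2, p.1)].
Proof.
apply/negP => /eqP/ffunP/(_ (widx n false, widx 0 true)).
rewrite ffunE wDelta_ZpowX; last exp_lia.
have -> : zred n (0 + n) = n by exp_lia.
rewrite !ffunE /= !xpair_eqE -!val_eqE /= !inordK ?eqxx; try exp_lia.
rewrite (gtn_eqF n_gt0) /= andbF !add0r => /eqP; apply/negP; exact: oner_neq0.
Qed.

Lemma wH_bialgebra : is_bialgebra c (wone k n) wDelta weps.
Proof.
split.
- by split; [exact: wH_assoc_unital | split; [exact: linearP | exact: linearP]].
- exact: wDelta_coassoc.
- by split; [exact: weps_counitl | exact: weps_counitr].
- split; first exact: wDelta_mul.
  by rewrite wDelta_Zpow ?alpha0 ?scale0r ?addr0 /wone /wmon ?tens_bvec; last exp_lia.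
- by split; [exact: weps_mul | rewrite weps_wmon].
Qed.

Lemma wH_weak_hopf : is_weak_hopf c (wone k n) wDelta weps wT.
Proof.
by split; [exact: wH_bialgebra | exact: linearP | exact: conv_wT_id_wT | exact: conv_id_wT_id].
Qed.

Lemma wT_generators : [/\ wT (wone k n) = wone k n,
  wT (wZ k n) = wmon (n.*2.-1) false & wT (wX k n) = - wmon n true].
Proof.
split; first by rewrite wT_Zpow.
- by rewrite wT_Zpow; [wmon_eq | exp_lia].
- by rewrite wT_ZpowX // expr0 invr1 scaleN1r; congr (- _); wmon_eq.
Qed.

End WeakHopf.

Theorem theorem3p1 (k : closedFieldType) (n : nat) (q a : k) :
  [pchar k] =i pred0 ->
  (0 < n)%N ->
  (n.*2).-primitive_root q ->
  a != 0 ->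
  let c := @wmul k n q in
  let one := wone k n in
  let Z := wZ k n in
  let X := wX k n in
  let m := smul c in
  (* the concrete algebra is the algebra generated by Z, X with the relations
     Z^{2n+1} = Z, ZX = qXZ, X^2 = 0 (presentation via universal property) *)
  [/\ is_assoc_unital c one,
      spow c one Z (n.*2.+1) = Z /\ m Z X = q *: m X Z /\ m X X = 0,
      (forall (B : algType k) (z x : B),
          z ^+ (n.*2.+1) = z -> z * x = q *: (x * z) -> x ^+ 2 = 0 ->
          exists f : vec k (wI n) -> B,
            [/\ is_alg_morph c one f, f Z = z, f X = x &
                forall g : vec k (wI n) -> B,
                  is_alg_morph c one g -> g Z = z -> g X = x ->
                  forall v, g v = f v]),
      (* noncommutative *)
      (exists u v, m u v != m v u) &
      (* weak Hopf structure with the prescribed Delta, eps, T *)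
      exists (Delta : vec k (wI n) -> vec k (wI n * wI n)%type)
             (eps : vec k (wI n) -> k) (T : vec k (wI n) -> vec k (wI n)),
        [/\ is_weak_hopf c one Delta eps T,
            Delta Z = tens Z Z
                      + (a * (1 - q ^- 2)) *: tens (wmon k n n.+1 true) (m Z X)
              /\ Delta X = tens X one + tens (wmon k n n false) X,
            eps Z = 1 /\ eps X = 0,
            [/\ (forall u v, T (m u v) = m (T v) (T u)), T one = one,
                T Z = wmon k n (n.*2.-1) false & T X = - wmon k n n true] &
            (* noncocommutative *)
            exists v, Delta v != [ffun p => Delta v (p.2, p.1)]]].
Proof.
move=> _ n_gt0 q_prim _; cbv zeta.
have [wT1 wTZ wTX] := wT_generators n_gt0 q_prim.
split.
- exact: wH_assoc_unital.
- by split; [exact: spow_wZ_order | exact: wH_relations].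
- by move=> B z x; exact: wH_universal.
- by exists (wZ k n), (wX k n); exact: wH_noncommutative.
exists (@wDelta k n q a), (@weps k n), (@wT k n q); split.
- exact: wH_weak_hopf.
- by split; [exact: wDelta_wZ | exact: wDelta_wX].
- by rewrite /wZ /wX !weps_wmon.
- by split=> //; exact: wT_antimul.
- by exists (wX k n); exact: wDelta_noncocommutative.
Qed.
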